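(* Let $a$ be a point of $AG(4,3)$ and let $L_1,L_2,L_3,L_4$ be four distinct $a$-lines whose $8$ points are not co-hyperplanar. Then there are exactly eight demicaps with anchor point $a$ that contain $L_1\cup L_2\cup L_3\cup L_4$.
   Context: $AG(4,3)$ is the affine space $\mathbb{F}_3^4$; a line is a set of three distinct points $\{x,y,z\}$ with $x+y+z=0$. A cap is a set of points containing no line. A hyperplane is a $3$-dimensional affine subspace of $\mathbb{F}_3^4$; a set of points is co-hyperplanar if it lies in a common hyperplane. For a point $a$, an $a$-line is a pair of points $\{b,c\}$ such that $\{a,b,c\}$ is a line. A demicap with anchor point $a$ is a cap consisting of the $10$ points of five $a$-lines such that no four of these five $a$-lines are co-hyperplanar. *)

(* AG(4,3) = F_3^4 as row vectors 'rV['F_3]_4. *)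
From mathcomp Require Import all_boot all_order all_algebra all_fingroup.
Set Implicit Arguments. Unset Strict Implicit. Unset Printing Implicit Defensive.
Import GRing.Theory.
Local Open Scope ring_scope.

Definition Point := 'rV['F_3]_4.

Definition is_line (x y z : Point) : bool :=
  [&& x != y, y != z, x != z & x + y + z == 0].

Definition cap (S : {set Point}) : bool :=
  [forall x in S, forall y in S, forall z in S, ~~ is_line x y z].

Definition hyperplane (H : {set Point}) : bool :=
  [exists p : Point, exists V : 'M['F_3]_4,
     (\rank V == 3)%N && (H == [set x : Point | (x - p <= V)%MS])].

Definition cohyperplanar (S : {set Point}) : bool :=
  [exists H : {set Point}, hyperplane H && (S \subset H)].

Definition aline (a : Point) (L : {set Point}) : bool :=
  [exists b : Point, exists c : Point, (L == [set b; c]) && is_line a b c].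

Definition demicap (a : Point) (D : {set Point}) : bool :=
  cap D && (#|D| == 10)%N &&
  [exists F : {set {set Point}},
     [&& #|F| == 5,
         [forall L in F, aline a L],
         D == cover F &
         [forall G : {set {set Point}},
            (G \subset F) && (#|G| == 4) ==> ~~ cohyperplanar (cover G)]]].

(* An a-line is a pair {a + u, a - u} with u <> 0, so it is determined by its
   direction u up to sign.  The whole argument is linear algebra over F_3 on
   these directions:
   - four a-lines are co-hyperplanar exactly when their directions do not span
     F_3^4 (cohyperplanar_aLines);
   - a family of at least four a-lines in which no four are co-hyperplanar is
     automatically a cap (generic_cap): a line x + y + z = 0 meeting three of
     them gives three dependent directions;
   - if the four given a-lines have directions the rows of an invertible matrix
     M, a fifth a-line with direction k *m M completes them to a demicap iff
     every coordinate of k is nonzero, since replacing row l of M by k *m M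
     keeps the rank iff k_l <> 0 (demicap_over_basis);
   - such k are the 16 vectors of {1,-1}^4, and k, -k give the same a-line,
     so there are 8 demicaps (card_demicaps_over_basis).
   The theorem follows by taking M to be the matrix of the four directions. *)

From mathcomp Require Import all_boot all_order all_algebra all_fingroup.
Set Implicit Arguments. Unset Strict Implicit. Unset Printing Implicit Defensive.
Import GRing.Theory.
Local Open Scope ring_scope.

Lemma F3_unit (x : 'F_3) : x != 0 -> x = 1 \/ x = -1.
Proof. by case: x => [[|[|[|n]]] Hn] //= _; [left | right]; apply/val_inj. Qed.

Lemma F3_oneN1 : (1 : 'F_3) != -1.
Proof. by []. Qed.

Lemma addrrr (V : lmodType 'F_3) (v : V) : v + v + v = 0.
Proof.
have : v *+ 3 = 0 by rewrite -scaler_nat (_ : 3%:R = 0 :> 'F_3) ?scale0r //; apply/eqP.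
by rewrite mulrS mulr2n addrC.
Qed.

Lemma addrr (V : lmodType 'F_3) (v : V) : v + v = - v.
Proof. by apply/eqP; rewrite -addr_eq0 addrrr. Qed.

Lemma sum_dirs (x y z a : Point) : x + y + z = 0 -> (x - a) + (y - a) + (z - a) = 0.
Proof. by move=> s; rewrite (addrACA x) (addrACA (x + y)) s add0r -!opprD addrrr oppr0. Qed.

Lemma coverU (T : finType) (P Q : {set {set T}}) : cover (P :|: Q) = cover P :|: cover Q.
Proof. by rewrite /cover big_setU //; exact: setUid. Qed.

Lemma coverU1 (T : finType) (A : {set T}) (P : {set {set T}}) : cover (A |: P) = A :|: cover P.
Proof. by rewrite coverU cover1. Qed.

Lemma four_of_five (T : finType) (F G : {set T}) :
  #|F| = 5 -> G \subset F -> #|G| = 4 -> exists2 X, X \in F & G = F :\ X.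
Proof.
move=> cF GF cG; have : #|F :\: G| == 1%N by rewrite cardsD (setIidPr GF) cF cG.
case/cards1P => X EX; exists X.
  by have /setDP [] : X \in F :\: G by rewrite EX set11.
by rewrite -EX setDDr setDv set0U (setIidPr GF).
Qed.

Section ALines.
Variable a : Point.

Definition aLine (u : Point) : {set Point} := [set a + u; a - u].

Lemma addr_eq_l (u : Point) : (a + u == a) = (u == 0).
Proof. by rewrite -subr_eq0 addrC addKr. Qed.

Lemma subr_eq_l (u : Point) : (a - u == a) = (u == 0).
Proof. by rewrite addr_eq_l oppr_eq0. Qed.

Lemma aLine_ends (u : Point) : (a + u == a - u) = (u == 0).
Proof. by rewrite -subr_eq0 opprB addrA -(addrA a u u) addrC addKr addrr oppr_eq0. Qed.

Lemma aline_aLine (u : Point) : u != 0 -> aline a (aLine u).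
Proof.
move=> u0; apply/existsP; exists (a + u); apply/existsP; exists (a - u).
rewrite eqxx /is_line ![a == _]eq_sym addr_eq_l subr_eq_l aLine_ends u0 /=.
by rewrite -addrA addrACA subrr addr0 addrA addrrr.
Qed.

Lemma alineP (L : {set Point}) : aline a L -> exists2 u, u != 0 & L = aLine u.
Proof.
case/existsP => b /existsP [c /andP [/eqP -> /and4P [ab _ _ /eqP s]]].
exists (b - a); first by rewrite subr_eq0 eq_sym.
have -> : c = - (a + b) by apply/eqP; rewrite -addr_eq0 addrC s.
by rewrite /aLine (addrC a (b - a)) subrK opprB addrA addrr opprD.
Qed.

Lemma aLineN (u : Point) : aLine (- u) = aLine u.
Proof. by apply/setP => x; rewrite !inE opprK orbC. Qed.

Lemma mem_aLine (u v : Point) : a + v \in aLine u -> v = u \/ v = - u.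
Proof. by rewrite !inE => /orP [] /eqP /addrI ->; [left | right]. Qed.

Lemma aLine_sign (u v : Point) : aLine u = aLine v -> v = u \/ v = - u.
Proof. by move=> E; apply: mem_aLine; rewrite E !inE eqxx. Qed.

Lemma aLine_dir (u x : Point) : x \in aLine u -> aLine (x - a) = aLine u.
Proof.
move=> xu; have : a + (x - a) \in aLine u by rewrite addrC subrK.
by case/mem_aLine => ->; rewrite ?aLineN.
Qed.

Lemma aLine_meet (u v x : Point) : x \in aLine u -> x \in aLine v -> aLine u = aLine v.
Proof. by move=> /aLine_dir <- /aLine_dir <-. Qed.

Lemma anchor_notin_aLine (u : Point) : u != 0 -> a \notin aLine u.
Proof. by move=> u0; rewrite !inE ![a == _]eq_sym addr_eq_l subr_eq_l (negbTE u0). Qed.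

Lemma aLine_of_point (u x : Point) : u != 0 -> x \in aLine u -> x - a != 0 /\ aLine (x - a) = aLine u.
Proof.
move=> u0 xu; split; last exact: aLine_dir.
by rewrite subr_eq0; apply: contraTneq xu => ->; exact: anchor_notin_aLine.
Qed.

(* Distinct a-lines are disjoint pairs, so n of them cover 2n points. *)
Lemma card_cover_alines (F : {set {set Point}}) :
  {in F, forall L, aline a L} -> #|cover F| = (2 * #|F|)%N.
Proof.
move=> alF; have tF : trivIset F.
  apply/trivIsetP => A B AF BF AB; apply/pred0P => x /=; apply/andP => -[xA xB].
  have [u _ Eu] := alineP (alF _ AF); have [v _ Ev] := alineP (alF _ BF).
  by move: AB; rewrite Eu Ev in xA xB *; rewrite (aLine_meet xA xB) eqxx.
rewrite -(eqP tF) mulnC -sum_nat_const; apply: eq_bigr => L LF.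
by have [u u0 ->] := alineP (alF _ LF); rewrite cards2 aLine_ends u0.
Qed.

Lemma third_point_anchor (x y z u : Point) :
  x + y + z = 0 -> x != y -> x \in aLine u -> y \in aLine u -> z = a.
Proof.
move=> s xy xu yu; have -> : z = - (x + y) by apply/eqP; rewrite -addr_eq0 addrC s.
suff -> : x + y = a + u + (a - u) by rewrite addrACA subrr addr0 addrr opprK.
move: xy xu yu; rewrite /aLine !inE => xy /orP [] /eqP ex /orP [] /eqP ey.
all: rewrite ex ey ?eqxx // in xy *.
exact: addrC.
Qed.

End ALines.

Lemma aLine_diff (a r p : Point) : (a + r - p) - (a - r - p) = - r.
Proof. by rewrite opprB addrA subrK opprB addrA -(addrA a r r) addrC addKr addrr. Qed.

Lemma nonzero_col (m n : nat) (C : 'M['F_3]_(m, n)) : C != 0 -> exists j, col j C != 0.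
Proof.
move=> Cnz; apply/existsP; apply: contraNT Cnz => /existsPn Cz.
by apply/eqP/matrixP => i j; move/negbNE/eqP/colP: (Cz j) => /(_ i); rewrite !mxE.
Qed.

(* Hyperplane criterion: a-lines with directions the rows of R lie in a common
   hyperplane iff these directions do not span F_3^4.  Forwards, every direction
   lies in the direction space of the hyperplane; backwards, the kernel of a
   nonzero column of the cokernel of R is a 3-space containing all rows. *)
Lemma cohyperplanar_aLines (a : Point) (n : nat) (R : 'M['F_3]_(n, 4)) :
  cohyperplanar (\bigcup_(i < n) aLine a (row i R)) = ~~ row_full R.
Proof.
apply/idP/idP.
  case/existsP => H /andP [/existsP [p /existsP [V /andP [/eqP rV /eqP HE]]] sub].
  have RV : (R <= V)%MS.
    apply/row_subP => i.
    have sub_i : {subset aLine a (row i R) <= H}.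
      by apply/subsetP; exact: subset_trans (bigcup_sup i isT) sub.
    have := sub_i (a + row i R); have := sub_i (a - row i R).
    rewrite HE !inE !eqxx ?orbT => /(_ isT) h2 /(_ isT) h1.
    by rewrite -eqmx_opp -(aLine_diff a _ p) addmx_sub // eqmx_opp.
  by apply: contraTN isT => fR; move: (mxrankS RV); rewrite rV (eqP fR).
move=> nfR; have rk : (\rank R < 4)%N by rewrite ltn_neqAle rank_leq_col andbT.
have [j cj] : exists j, col j (cokermx R) != 0.
  by apply: nonzero_col; rewrite -mxrank_eq0 mxrank_coker subn_eq0 -ltnNge.
set V := kermx (col j (cokermx R)).
have rV : \rank V = 3%N.
  rewrite mxrank_ker; suff -> : \rank (col j (cokermx R)) = 1%N by [].
  by apply/eqP; rewrite eqn_leq rank_leq_col lt0n mxrank_eq0.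
have RV : forall r : Point, (r <= R)%MS -> (r <= V)%MS.
  move=> r; rewrite submxE => /eqP rC; apply/sub_kermxP.
  by rewrite colE mulmxA rC mul0mx.
apply/existsP; exists [set x | (x - a <= V)%MS]; apply/andP; split.
  by apply/existsP; exists a; apply/existsP; exists V; rewrite rV !eqxx.
apply/subsetP => x /bigcupP [k _]; rewrite !inE => /orP [] /eqP ->; rewrite (addrC a) addrK.
  exact/RV/row_sub.
by rewrite eqmx_opp; exact/RV/row_sub.
Qed.

Definition dirmx (u1 u2 u3 u4 : Point) : 'M['F_3]_4 :=
  \matrix_(i < 4) [:: u1; u2; u3; u4]`_i.

Lemma cover_dirmx (a u1 u2 u3 u4 : Point) :
  \bigcup_(i < 4) aLine a (row i (dirmx u1 u2 u3 u4)) =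
  aLine a u1 :|: aLine a u2 :|: aLine a u3 :|: aLine a u4.
Proof. by rewrite !big_ord_recl big_ord0 setU0 !rowK !setUA. Qed.

Lemma dirmx_dep (u1 u2 u3 u4 : Point) : u1 + u2 + u3 = 0 -> ~~ row_full (dirmx u1 u2 u3 u4).
Proof.
move=> s; apply/negP => fr.
pose v : 'rV['F_3]_4 := \row_i [:: 1; 1; 1; 0]`_i.
have : v *m dirmx u1 u2 u3 u4 == 0.
  by rewrite mulmx_sum_row !big_ord_recl big_ord0 !rowK !mxE /= !scale1r scale0r !addr0 !addrA s.
rewrite mulmx_free_eq0 // => /eqP /rowP /(_ 0).
by rewrite !mxE /=; apply/eqP; rewrite oner_eq0.
Qed.

Definition generic (F : {set {set Point}}) : bool :=
  [forall G : {set {set Point}}, (G \subset F) && (#|G| == 4) ==> ~~ cohyperplanar (cover G)].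

Lemma demicapE (a : Point) (D : {set Point}) :
  demicap a D = [&& cap D, #|D| == 10 &
    [exists F : {set {set Point}}, [&& #|F| == 5, [forall L in F, aline a L], D == cover F & generic F]]].
Proof. by rewrite /demicap andbA. Qed.

Lemma generic5 (F : {set {set Point}}) : #|F| = 5 ->
  generic F = [forall X in F, ~~ cohyperplanar (cover (F :\ X))].
Proof.
move=> cF; apply/forallP/forall_inP => [hG X XF | hX G].
  apply: (implyP (hG (F :\ X))); rewrite subD1set /=.
  by have := cardsD1 X F; rewrite XF cF add1n => -[<-].
apply/implyP => /andP [GF /eqP cG].
by have [X XF ->] := four_of_five cF GF cG; exact: hX.
Qed.

Lemma cover4 (T : finType) (A B C D : {set T}) :
  cover [set A; B; C; D] = A :|: B :|: C :|: D.
Proof. by rewrite !coverU !cover1. Qed.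

Lemma card4 (T : finType) (A B C D : T) :
  A != B -> A != C -> A != D -> B != C -> B != D -> C != D -> #|[set A; B; C; D]| = 4.
Proof.
move=> AB AC AD BC BD CD.
have -> : [set A; B; C; D] = A |: (B |: (C |: [set D])) by apply/setP => x; rewrite !inE !orbA.
by rewrite !cardsU1 cards1 !inE (negbTE AB) (negbTE AC) (negbTE AD) (negbTE BC) (negbTE BD) (negbTE CD).
Qed.

Lemma collinear_distinct_aLines (a x y z u v : Point) :
  x + y + z = 0 -> x != y -> z - a != 0 -> x \in aLine a u -> y \in aLine a v ->
  aLine a u != aLine a v.
Proof.
move=> s xy za xu yv; apply: contraNneq za => E.
by rewrite (third_point_anchor s xy xu) ?E // subrr.
Qed.

(* A line x, y, z in the union meets three distinct
   a-lines whose directions sum to 0; together with any fourth a-line of the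
   family they would be co-hyperplanar. *)
Lemma generic_cap (a : Point) (F : {set {set Point}}) :
  {in F, forall L, aline a L} -> (3 < #|F|)%N -> generic F -> cap (cover F).
Proof.
move=> alF cF gF.
have dirF L x : L \in F -> x \in L -> x - a != 0 /\ aLine a (x - a) = L.
  by move=> LF; have [u u0 ->] := alineP (alF _ LF); exact: aLine_of_point.
apply/forall_inP => x /bigcupP [Lx Fx xLx]; apply/forall_inP => y /bigcupP [Ly Fy yLy].
apply/forall_inP => z /bigcupP [Lz Fz zLz]; apply/negP => /and4P [xy yz xz /eqP s].
have [x0 Ex] := dirF _ _ Fx xLx; have [y0 Ey] := dirF _ _ Fy yLy; have [z0 Ez] := dirF _ _ Fz zLz.
rewrite -Ex -Ey -Ez in xLx yLy zLz.
have Lxy : Lx != Ly by rewrite -Ex -Ey; exact: collinear_distinct_aLines s xy z0 xLx yLy.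
have Lyz : Ly != Lz.
  rewrite -Ey -Ez; apply: collinear_distinct_aLines yz x0 yLy zLz.
  by rewrite addrC addrA.
have Lxz : Lx != Lz.
  rewrite -Ex -Ez; apply: collinear_distinct_aLines xz y0 xLx zLz.
  by rewrite addrAC.
have [Lt FLt] : exists2 Lt, Lt \in F & Lt \notin [set Lx; Ly; Lz].
  apply/subsetPn; apply: contraTN cF; rewrite -leqNgt => /subset_leq_card /leq_trans; apply.
  by rewrite -setUA cardsU1 cards2 Lyz; case: (_ \notin _).
rewrite !inE ![Lt == _]eq_sym => /norP [/norP [Lxt Lyt] Lzt].
have [t t0 Et] := alineP (alF _ FLt).
have GF : [set Lx; Ly; Lz; Lt] \subset F.
  by apply/subsetP => L; rewrite !inE -!orbA => /or4P [] /eqP ->.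
have := implyP (forallP gF [set Lx; Ly; Lz; Lt]).
rewrite GF card4 // cover4 -Ex -Ey -Ez Et -cover_dirmx cohyperplanar_aLines negbK => /(_ isT).
by apply/negP; exact: dirmx_dep (sum_dirs _ s).
Qed.

Section ReplaceRow.
Variables (K : fieldType) (n : nat).

Definition replace_row (l : 'I_n) (k : 'rV[K]_n) : 'M[K]_n :=
  \matrix_(i, c) if i == l then k 0 c else (i == c)%:R.

Lemma mul_replace_row l k (v : 'rV[K]_n) c :
  (v *m replace_row l k) 0 c = v 0 l * k 0 c + (if c == l then 0 else v 0 c).
Proof.
rewrite mxE (bigD1 l) //= mxE eqxx; congr (_ + _).
case: eqP => [-> | /eqP cl].
  by apply: big1 => i il; rewrite mxE (negbTE il) mulr0.
rewrite (bigD1 c) //= mxE (negbTE cl) eqxx mulr1 big1 ?addr0 // => i /andP [il ic].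
by rewrite mxE (negbTE il) (negbTE ic) mulr0.
Qed.

(* It is invertible iff the pivot entry k_l is nonzero; when k_l = 0 the
   vector delta_l - k is a nonzero element of its left kernel. *)
Lemma replace_row_free l k : row_free (replace_row l k) = (k 0 l != 0).
Proof.
apply/idP/idP => [fr | kl].
  apply: contraTneq fr => kl0; apply/negP => fr.
  have : (delta_mx 0 l - k) *m replace_row l k == 0.
    apply/eqP/rowP => c; rewrite mul_replace_row !mxE !eqxx kl0 subr0 mul1r.
    by case: eqP => [-> | /eqP cl]; rewrite ?kl0 ?addr0 //= sub0r subrr.
  rewrite mulmx_free_eq0 // => /eqP /rowP /(_ l).
  by rewrite !mxE !eqxx kl0 subr0 /=; apply/eqP; rewrite oner_eq0.
apply: inj_row_free => v vR0.
have h c : v 0 l * k 0 c + (if c == l then 0 else v 0 c) = 0.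
  by rewrite -mul_replace_row vR0 mxE.
have vl : v 0 l = 0.
  by have /eqP := h l; rewrite eqxx addr0 mulf_eq0 (negbTE kl) orbF => /eqP.
apply/rowP => c; rewrite mxE; have := h c; rewrite vl mul0r add0r.
by case: eqP => [-> | _].
Qed.

Lemma row_replace_row l k m (M : 'M[K]_(n, m)) i :
  row i (replace_row l k *m M) = if i == l then k *m M else row i M.
Proof.
rewrite row_mul; have -> : row i (replace_row l k) = if i == l then k else delta_mx 0 i.
  by apply/rowP => c; rewrite !mxE; case: (i == l); rewrite // mxE eqxx /= eq_sym.
by case: (i == l); rewrite // -rowE.
Qed.

End ReplaceRow.

Lemma row_full_replace_row (K : fieldType) (n : nat) (M : 'M[K]_n) l k :
  row_free M -> row_full (replace_row l k *m M) = (k 0 l != 0).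
Proof. by move=> frM; rewrite -replace_row_free /row_full mxrankMfree. Qed.

(* The vectors of {1,-1}^4 with last coordinate 1, indexed by the signs of the
   first three coordinates: one representative of each a-line direction with
   all coordinates nonzero. *)
Definition sign_of (b : bool) : 'F_3 := if b then 1 else -1.

Definition signed_row (b : {ffun 'I_3 -> bool}) : 'rV['F_3]_4 :=
  \row_c if unlift ord_max c is Some j then sign_of (b j) else 1.

Lemma sign_of_nz (b : bool) : sign_of b != 0.
Proof. by case: b; rewrite /sign_of ?oppr_eq0 oner_eq0. Qed.

Lemma sign_of_inj : injective sign_of.
Proof. by do 2![case] => // /eqP; rewrite ?(negbTE F3_oneN1) // eq_sym (negbTE F3_oneN1). Qed.

Lemma sign_ofE (x : 'F_3) : x != 0 -> sign_of (x == 1) = x.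
Proof. by case/F3_unit => ->; rewrite /sign_of ?eqxx // eq_sym (negbTE F3_oneN1). Qed.

Lemma signed_row_nz (b : {ffun 'I_3 -> bool}) : [forall c, signed_row b 0 c != 0].
Proof. by apply/forallP => c; rewrite mxE; case: unlift => [j|]; rewrite ?sign_of_nz ?oner_eq0. Qed.

Lemma signed_row_normal (k : 'rV['F_3]_4) : (forall c, k 0 c != 0) ->
  exists b, k = signed_row b \/ k = - signed_row b.
Proof.
move=> kn; have s1 := F3_unit (kn ord_max).
pose b := [ffun j => k 0 ord_max * k 0 (lift ord_max j) == 1]; exists b.
have sk : signed_row b = k 0 ord_max *: k.
  apply/rowP => c; rewrite !mxE; case: unliftP => [j -> | ->].
    by rewrite ffunE sign_ofE // (mulf_neq0 (kn _) (kn _)).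
  by case: s1 => ->; rewrite ?mulrNN mulr1.
case: s1 => Es; rewrite Es in sk.
  by left; rewrite sk scale1r.
by right; rewrite sk scaleN1r opprK.
Qed.

Lemma signed_row_inj (b b' : {ffun 'I_3 -> bool}) :
  signed_row b' = signed_row b \/ signed_row b' = - signed_row b -> b' = b.
Proof.
case=> /rowP E.
  by apply/ffunP => j; move: (E (lift ord_max j)); rewrite !mxE liftK => /sign_of_inj.
by move: (E ord_max); rewrite !mxE unlift_none => /eqP; rewrite (negbTE F3_oneN1).
Qed.

Section Basis.
Variables (a : Point) (M : 'M['F_3]_4).
Hypothesis frM : row_free M.

Definition basis_line (i : 'I_4) : {set Point} := aLine a (row i M).
Definition basis_lines : {set {set Point}} := [set basis_line i | i : 'I_4].
Definition basis_union : {set Point} := \bigcup_i basis_line i.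

Lemma aLine_coords_sign (k k' : 'rV['F_3]_4) :
  aLine a (k *m M) = aLine a (k' *m M) -> k' = k \/ k' = - k.
Proof. by case/aLine_sign => E; [left | right]; apply: (row_free_inj frM); rewrite ?mulNmx. Qed.

Lemma basis_row_nz i : row i M != 0.
Proof.
rewrite rowE mulmx_free_eq0 //; apply/negP => /eqP /rowP /(_ i).
by rewrite !mxE !eqxx; apply/eqP; rewrite oner_eq0.
Qed.

Lemma basis_line_inj : injective basis_line.
Proof.
move=> i j; rewrite /basis_line !rowE => /aLine_coords_sign /=.
case=> /rowP /(_ j); rewrite !mxE !eqxx /=; by case: eqP.
Qed.

Lemma card_basis_lines : #|basis_lines| = 4.
Proof. by rewrite card_imset ?card_ord //; exact: basis_line_inj. Qed.

Lemma cover_basis_lines : cover basis_lines = basis_union.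
Proof. by rewrite cover_imset; apply: eq_bigl => i; rewrite inE. Qed.

Lemma ext_line_new (k : 'rV['F_3]_4) :
  (forall c, k 0 c != 0) -> aLine a (k *m M) \notin basis_lines.
Proof.
move=> kn; apply/imsetP => -[i _]; rewrite /basis_line rowE => /aLine_coords_sign.
have [c ci] : exists c : 'I_4, c != i.
  by exists (if i == ord0 then ord_max else ord0); case: (i =P ord0) => [-> | /eqP]; rewrite // eq_sym.
case=> /rowP /(_ c); rewrite !mxE (negbTE ci) /= ?oppr0 => /eqP.
all: by rewrite eq_sym ?oppr_eq0 (negbTE (kn c)).
Qed.

Lemma cover_swap (k : 'rV['F_3]_4) (l : 'I_4) : aLine a (k *m M) \notin basis_lines ->
  cover ((aLine a (k *m M) |: basis_lines) :\ basis_line l) =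
  \bigcup_i aLine a (row i (replace_row l k *m M)).
Proof.
move=> kS; apply/setP => x; apply/bigcupP/bigcupP.
  case=> B; rewrite !inE => /andP [Bl /orP [/eqP -> | /imsetP [i _ EB]]] xB.
    by exists l; rewrite // row_replace_row eqxx.
  exists i => //; rewrite row_replace_row; rewrite EB in Bl xB.
  by case: (i =P l) Bl => [-> | _]; rewrite ?eqxx.
case=> i _; rewrite row_replace_row; case: eqP => [_ | /eqP il] xi.
  exists (aLine a (k *m M)) => //; rewrite !inE eqxx andbT.
  by apply: contra kS => /eqP ->; exact: imset_f.
exists (basis_line i) => //; rewrite !inE (inj_eq basis_line_inj) il /=.
by apply/orP; right; exact: imset_f.
Qed.

Lemma generic_extension (k : 'rV['F_3]_4) : aLine a (k *m M) \notin basis_lines ->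
  generic (aLine a (k *m M) |: basis_lines) = [forall c, k 0 c != 0].
Proof.
move=> kS; rewrite generic5; last by rewrite cardsU1 kS card_basis_lines.
apply/forall_inP/forallP => [hX l | kn X].
  have := hX (basis_line l); rewrite inE imset_f ?orbT // => /(_ isT).
  by rewrite cover_swap // cohyperplanar_aLines negbK row_full_replace_row.
move/setU1P => [-> | /imsetP [l _ ->]].
  by rewrite setU1K // cover_basis_lines cohyperplanar_aLines negbK.
by rewrite cover_swap // cohyperplanar_aLines negbK row_full_replace_row.
Qed.

Lemma basis_lines_in (F : {set {set Point}}) :
  {in F, forall L, aline a L} -> basis_union \subset cover F -> basis_lines \subset F.
Proof.
move=> alF /subsetP UF; apply/subsetP => _ /imsetP [i _ ->].
have /bigcupP [L LF xL] : a + row i M \in cover F.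
  by apply: UF; apply/bigcupP; exists i => //; rewrite !inE eqxx.
have [u _ Eu] := alineP (alF _ LF); rewrite Eu in xL LF.
by rewrite -(aLine_dir xL) (addrC a) addrK in LF.
Qed.

Lemma demicap_over_basis (D : {set Point}) : basis_union \subset D ->
  demicap a D <-> exists2 k : 'rV['F_3]_4, [forall c, k 0 c != 0] & D = basis_union :|: aLine a (k *m M).
Proof.
move=> UD; rewrite demicapE; split.
  case/and3P => _ _ /existsP [F /and4P [/eqP cF /forall_inP alF /eqP DF gF]].
  have SF : basis_lines \subset F by apply: basis_lines_in; rewrite // -DF.
  have [L LF SE] := four_of_five cF SF card_basis_lines.
  have LS : L \notin basis_lines by rewrite SE setD11.
  have [e _ Le] := alineP (alF _ LF).
  have eE : e = (e *m invmx M) *m M by rewrite mulmxKV // -row_free_unit.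
  exists (e *m invmx M).
    by rewrite -generic_extension -eE -Le //= SE setD1K.
  by rewrite DF -eE -Le -cover_basis_lines setUC -coverU1 SE setD1K.
case=> k kn ->; have kS := ext_line_new (forallP kn).
set F := aLine a (k *m M) |: basis_lines.
have cF : #|F| = 5 by rewrite cardsU1 kS card_basis_lines.
have alF : {in F, forall L, aline a L}.
  move=> L /setU1P [-> | /imsetP [i _ ->]]; apply: aline_aLine; last exact: basis_row_nz.
  rewrite mulmx_free_eq0 //; apply: contraTneq (forallP kn ord0) => ->.
  by rewrite mxE.
have gF : generic F by rewrite generic_extension.
have covF : cover F = basis_union :|: aLine a (k *m M).
  by rewrite coverU1 cover_basis_lines setUC.
rewrite -covF (generic_cap alF) ?cF // (card_cover_alines alF) cF eqxx /=.
by apply/existsP; exists F; rewrite cF gF !eqxx /= andbT; apply/forall_inP.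
Qed.

Lemma extension_line_sign (k k' : 'rV['F_3]_4) : (forall c, k 0 c != 0) ->
  basis_union :|: aLine a (k *m M) = basis_union :|: aLine a (k' *m M) -> k' = k \/ k' = - k.
Proof.
move=> kn E; have xk : a + k *m M \in aLine a (k *m M) by rewrite !inE eqxx.
have : a + k *m M \in basis_union :|: aLine a (k' *m M) by rewrite -E inE xk orbT.
case/setUP => [/bigcupP [i _ xi] | xk']; last exact/aLine_coords_sign/(aLine_meet xk).
by case/negP: (ext_line_new kn); rewrite (aLine_meet xk xi); exact: imset_f.
Qed.

Lemma card_demicaps_over_basis : #|[set D | demicap a D & basis_union \subset D]| = 8.
Proof.
have -> : [set D | demicap a D & basis_union \subset D] =
          [set basis_union :|: aLine a (signed_row b *m M) | b : {ffun 'I_3 -> bool}].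
  apply/setP => D; rewrite inE; apply/andP/imsetP => [[dD UD] | [b _ ->]].
    have [k /forallP kn ->] := (demicap_over_basis UD).1 dD.
    have [b Eb] := signed_row_normal kn; exists b; first by [].
    by case: Eb => ->; rewrite ?mulNmx ?aLineN.
  split; last exact: subsetUl.
  apply/(demicap_over_basis (subsetUl _ _)).
  by exists (signed_row b); rewrite ?signed_row_nz.
rewrite card_imset; last first.
  move=> b b' E; apply/esym/signed_row_inj.
  exact: extension_line_sign (forallP (signed_row_nz b)) E.
by rewrite card_ffun card_bool card_ord.
Qed.

End Basis.

Local Close Scope ring_scope.

(* Corollary 3.7. *)
Theorem corollary3p7 (a : Point) (L1 L2 L3 L4 : {set Point}) :
  aline a L1 -> aline a L2 -> aline a L3 -> aline a L4 ->
  L1 != L2 -> L1 != L3 -> L1 != L4 -> L2 != L3 -> L2 != L4 -> L3 != L4 ->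
  ~~ cohyperplanar (L1 :|: L2 :|: L3 :|: L4) ->
  #|[set D : {set Point} | demicap a D & (L1 :|: L2 :|: L3 :|: L4) \subset D]| = 8.
Proof.
move=> h1 h2 h3 h4 _ _ _ _ _ _.
have [u1 _ ->] := alineP h1; have [u2 _ ->] := alineP h2.
have [u3 _ ->] := alineP h3; have [u4 _ ->] := alineP h4.
rewrite -cover_dirmx cohyperplanar_aLines negbK => free.
exact: card_demicaps_over_basis free.
Qed.
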